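(* Let $V\in\mathfrak M_S$ and let $\mathfrak h$ be a principal subalgebra of $\mathfrak g_2$. Then $\mathfrak h$ is adapted to $V$ if and only if $\theta_V\in H^{\mathfrak h}$, where $\theta_V\in G_2$ is defined by $\theta_V|_V=\mathrm{id}$, $\theta_V|_{V^\perp}=-\mathrm{id}$, and $H^{\mathfrak h}=\{F\in G_2: F\mathfrak hF^{-1}\subseteq\mathfrak h\}$.
   Context: Setup: Let $\langle\cdot,\cdot\rangle$ be the standard inner product on $\mathbb R^7$ with standard basis $e_1,\dots,e_7$, and let $\times$ be the anticommutative bilinear product on $\mathbb R^7$ determined by $e_i\times e_{i+1}=e_{i+3}$, $e_{i+1}\times e_{i+3}=e_i$, $e_{i+3}\times e_i=e_{i+1}$ (indices mod 7); it is a cross product. $G_2=\mathrm{Aut}(\mathbb R^7,\times)$, with Lie algebra $\mathfrak g_2=\mathrm{Der}(\mathbb R^7,\times)=\{d\in\mathfrak{gl}(7,\mathbb R): d(x\times y)=d(x)\times y+x\times d(y)\}$. $\mathfrak M_S=\{V\le\mathbb R^7:\dim V=3,\ V\times V\subseteq V\}$; for $V\in\mathfrak M_S$ one has $V\times V^\perp\subseteq V^\perp$ and $V^\perp\times V^\perp\subseteq V$, so $\theta_V$ is an automorphism of order two. For $V\in\mathfrak M_S$: $\mathfrak h_4^V=\{d\in\mathfrak g_2: d(V^\perp)\subseteq V^\perp\}$ and $\mathfrak m_4^V=\{d\in\mathfrak g_2: d(V)\subseteq V^\perp,\ d(V^\perp)\subseteq V\}$. A principal subalgebra of $\mathfrak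 g_2$ is a three-dimensional simple subalgebra $\mathfrak h$ whose complexification contains a principal (regular) nilpotent element of $\mathfrak g_2\otimes\mathbb C$ (one whose adjoint orbit is dense in the nilpotent variety). A principal subalgebra $\mathfrak h$ is adapted to $V\in\mathfrak M_S$ if $\mathfrak h=(\mathfrak h\cap\mathfrak h_4^V)\oplus(\mathfrak h\cap\mathfrak m_4^V)$. *)

(* Linear maps of F^7 are 7x7 matrices acting on COLUMN
   vectors: d applied to x is  d *m x, so composition is matrix product. *)
From HB Require Import structures.
From mathcomp Require Import all_boot all_order all_algebra.
From mathcomp Require Import reals.
From mathcomp Require Import complex.
Set Implicit Arguments. Unset Strict Implicit. Unset Printing Implicit Defensive.
Import Order.TTheory GRing.Theory Num.Theory.
Local Open Scope ring_scope.

Section G2defs.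
Variable F : fieldType.

(* standard basis vector e_{k mod 7} (indices 0..6 stand for e_1..e_7) *)
Definition e7 (k : nat) : 'cV[F]_7 := delta_mx (inord (k %% 7)) 0.

(* the product on basis vectors: e_i x e_{i+1} = e_{i+3},
   e_{i+1} x e_{i+3} = e_i, e_{i+3} x e_i = e_{i+1} (indices mod 7),
   extended anticommutatively (and e_a x e_a = 0) *)
Definition cross_basis (a b : 'I_7) : 'cV[F]_7 :=
  \sum_(i < 7)
    ( ((a == i :> nat) && (b == (i.+1 %% 7)%N :> nat))%:R *: e7 i.+3
    + ((a == (i.+1 %% 7)%N :> nat) && (b == (i.+3 %% 7)%N :> nat))%:R *: e7 i
    + ((a == (i.+3 %% 7)%N :> nat) && (b == i :> nat))%:R *: e7 i.+1
    - ((b == i :> nat) && (a == (i.+1 %% 7)%N :> nat))%:R *: e7 i.+3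
    - ((b == (i.+1 %% 7)%N :> nat) && (a == (i.+3 %% 7)%N :> nat))%:R *: e7 i
    - ((b == (i.+3 %% 7)%N :> nat) && (a == i :> nat))%:R *: e7 i.+1).

Definition cross (x y : 'cV[F]_7) : 'cV[F]_7 :=
  \sum_(a < 7) \sum_(b < 7) (x a 0 * y b 0) *: cross_basis a b.

Definition is_der (d : 'M[F]_7) : Prop :=
  forall x y : 'cV[F]_7, d *m cross x y = cross (d *m x) y + cross x (d *m y).

Definition inG2 (g : 'M[F]_7) : Prop :=
  g \in unitmx /\ forall x y : 'cV[F]_7, g *m cross x y = cross (g *m x) (g *m y).

Definition lbr (a b : 'M[F]_7) : 'M[F]_7 := a * b - b * a.

End G2defs.

Section Real.
Variable R : realType.

Definition dot (x y : 'cV[R]_7) : R := \sum_(a < 7) x a 0 * y a 0.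

Definition in_perp (V : {vspace 'cV[R]_7}) (x : 'cV[R]_7) : Prop :=
  forall v, v \in V -> dot v x = 0.

Definition in_MS (V : {vspace 'cV[R]_7}) : Prop :=
  \dim V = 3%N /\ forall x y, x \in V -> y \in V -> cross x y \in V.

Definition in_h4 (V : {vspace 'cV[R]_7}) (d : 'M[R]_7) : Prop :=
  is_der d /\ forall x, in_perp V x -> in_perp V (d *m x).

Definition in_m4 (V : {vspace 'cV[R]_7}) (d : 'M[R]_7) : Prop :=
  is_der d /\ (forall x, x \in V -> in_perp V (d *m x))
           /\ (forall x, in_perp V x -> d *m x \in V).

Definition lie_subalg_g2 (h : {vspace 'M[R]_7}) : Prop :=
  (forall d, d \in h -> is_der d) /\
  (forall a b, a \in h -> b \in h -> lbr a b \in h).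

Definition lie_simple (h : {vspace 'M[R]_7}) : Prop :=
  (exists a b, [/\ a \in h, b \in h & lbr a b != 0]) /\
  forall I : {vspace 'M[R]_7}, (I <= h)%VS ->
    (forall a b, a \in h -> b \in I -> lbr a b \in I) ->
    I = 0%VS \/ I = h.

(* complexification  g_2 (x) C  = derivations of (C^7, x) *)
Local Notation C := (complex R).

Definition complexify (h : {vspace 'M[R]_7}) : {vspace 'M[C]_7} :=
  <<map (map_mx (fun r : R => (r%:C)%C)) (vbasis h)>>%VS.

Definition nilp_g2C (X : 'M[C]_7) : Prop :=
  is_der X /\ exists k : nat, forall Y, is_der Y -> iter k (lbr X) Y = 0.

Definition cent_dim (X : 'M[C]_7) (n : nat) : Prop :=
  (exists s : seq 'M[C]_7, [/\ size s = n, free s &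
      forall Y, Y \in s -> is_der Y /\ lbr X Y = 0]) /\
  (forall s : seq 'M[C]_7, free s ->
      (forall Y, Y \in s -> is_der Y /\ lbr X Y = 0) -> (size s <= n)%N).

Definition principal_nilp (X : 'M[C]_7) : Prop :=
  nilp_g2C X /\
  forall Y n m, is_der Y -> cent_dim X n -> cent_dim Y m -> (n <= m)%N.

Definition principal_subalg (h : {vspace 'M[R]_7}) : Prop :=
  [/\ \dim h = 3%N, lie_subalg_g2 h, lie_simple h &
      exists X, X \in complexify h /\ principal_nilp X].

Definition adapted (V : {vspace 'cV[R]_7}) (h : {vspace 'M[R]_7}) : Prop :=
  (forall d, d \in h -> exists a b,
      [/\ a \in h, in_h4 V a, b \in h, in_m4 V b & d = a + b]) /\
  (forall d, d \in h -> in_h4 V d -> in_m4 V d -> d = 0).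

Definition in_Hh (h : {vspace 'M[R]_7}) (g : 'M[R]_7) : Prop :=
  inG2 g /\ forall d, d \in h -> g * d * invmx g \in h.

End Real.

From HB Require Import structures.
From mathcomp Require Import all_boot all_order all_algebra.
From mathcomp Require Import reals complex.
From mathcomp Require Import ring.
Import GRing.Theory Num.Theory.
Local Open Scope ring_scope.
Set Implicit Arguments. Unset Strict Implicit. Unset Printing Implicit Defensive.

(* theta_V is the involution of R^7 = V (+) V^perp that is 1 on V and -1 on V^perp.
   It preserves the cross product because V x V <= V, V x V^perp <= V^perp and
   V^perp x V^perp <= V.  The last inclusion is a dimension count: for a nonzero
   p in V^perp the map v |-> v x p embeds V into V^perp orthogonally to p, so
   V^perp = R p (+) V x p, and p x (v x p) = |p|^2 v lies in V.
   Conjugation by theta_V is an involution of g_2 whose (+1)-eigenspace is h_4^V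
   (a derivation preserving V^perp also preserves V = V^perp x V^perp) and whose
   (-1)-eigenspace is m_4^V.  So h splits along h_4^V (+) m_4^V exactly when it is
   stable under this conjugation, the components of d being (d +- theta d theta)/2. *)

Lemma mulmx_cVP (F : fieldType) n (A B : 'M[F]_n) :
  (forall u : 'cV_n, A *m u = B *m u) -> A = B.
Proof.
move=> eqAB; apply/trmx_inj/eqP/mulmxP => u; apply: trmx_inj.
by rewrite !trmx_mul !trmxK eqAB.
Qed.

Lemma lmod_eqN (K : numFieldType) (M : lmodType K) (x : M) : (- x == x) = (x == 0).
Proof.
by rewrite eq_sym -addr_eq0 -mulr2n -scaler_nat scaler_eq0 pnatr_eq0.
Qed.

Lemma eq_inord n (k : 'I_n.+1) m : (m < n.+1)%N -> (k == inord m) = (k == m :> nat).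
Proof. by move=> lt_m_n; rewrite -val_eqE /= inordK. Qed.

Local Notation o0 := (@Ordinal 7 0 isT).
Local Notation o1 := (@Ordinal 7 1 isT).
Local Notation o2 := (@Ordinal 7 2 isT).
Local Notation o3 := (@Ordinal 7 3 isT).
Local Notation o4 := (@Ordinal 7 4 isT).
Local Notation o5 := (@Ordinal 7 5 isT).
Local Notation o6 := (@Ordinal 7 6 isT).

Lemma big_ord7 (V : nmodType) (G : 'I_7 -> V) :
  \sum_(i < 7) G i = G o0 + G o1 + G o2 + G o3 + G o4 + G o5 + G o6.
Proof.
rewrite !big_ord_recl big_ord0 addr0 /= !addrA.
by repeat congr (_ + _); congr G; apply/val_inj.
Qed.

Lemma ord7_ind (P : 'I_7 -> Prop) :
  P o0 -> P o1 -> P o2 -> P o3 -> P o4 -> P o5 -> P o6 -> forall i, P i.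
Proof.
move=> P0 P1 P2 P3 P4 P5 P6 [[|[|[|[|[|[|[|n]]]]]]] lt_n7] //;
  by rewrite (bool_irrelevance lt_n7 isT).
Qed.

(* Line i is (i, i+1, i+3) mod 7, so [oriented a b k] says that e_a x e_b = e_k. *)
Definition fano_lines : seq (nat * nat * nat) :=
  [:: (0, 1, 3); (1, 2, 4); (2, 3, 5); (3, 4, 6); (4, 5, 0); (5, 6, 1); (6, 0, 2)]%N.

Definition oriented (a b k : nat) : bool :=
  has (fun '(i, j, l) => [|| (a, b, k) == (i, j, l), (a, b, k) == (j, l, i)
                           | (a, b, k) == (l, i, j)]) fano_lines.

(* A nat-valued copy of the entries of [cross_basis], which [vm_compute] evaluates. *)
Definition fano_count (a b k : nat) : nat :=
  \sum_(0 <= i < 7) (((a == i) && (b == i.+1 %% 7)) * (k == i.+3 %% 7)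
                   + ((a == i.+1 %% 7) && (b == i.+3 %% 7)) * (k == i %% 7)
                   + ((a == i.+3 %% 7) && (b == i)) * (k == i.+1 %% 7))%N.

Lemma fano_countE (a b k : 'I_7) : fano_count a b k = oriented a b k.
Proof.
have : all (fun a => all (fun b => all (fun k => fano_count a b k == oriented a b k)
         (iota 0 7)) (iota 0 7)) (iota 0 7).
  by rewrite /fano_count unlock; vm_compute.
by move=> /allP /(_ a) /[!(mem_iota, ltn_ord)] /(_ isT) /allP /(_ b) /[!(mem_iota, ltn_ord)]
  /(_ isT) /allP /(_ k) /[!(mem_iota, ltn_ord)] /(_ isT) /eqP.
Qed.

Section CrossCoordinates.
Variable F : fieldType.
Implicit Types x y : 'cV[F]_7.

Lemma cross_basisE (a b k : 'I_7) :
  cross_basis F a b k 0 = (oriented a b k)%:R - (oriented b a k)%:R.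
Proof.
rewrite -!fano_countE /cross_basis summxE /fano_count !big_mkord !natr_sum -sumrB.
apply: eq_bigr => i _; rewrite !mxE !andbT !eq_inord ?ltn_pmod // !natrD !natrM; ring.
Qed.

Lemma crossE x y k : cross x y k 0 =
  \sum_(a < 7) \sum_(b < 7) x a 0 * y b 0 * ((oriented a b k)%:R - (oriented b a k)%:R).
Proof.
rewrite summxE; apply: eq_bigr => a _; rewrite summxE; apply: eq_bigr => b _.
by rewrite mxE cross_basisE.
Qed.

Lemma cross_coord0 x y : cross x y o0 0 =
    (x o1 0 * y o3 0 - x o3 0 * y o1 0) + (x o2 0 * y o6 0 - x o6 0 * y o2 0)
  + (x o4 0 * y o5 0 - x o5 0 * y o4 0).
Proof. by rewrite crossE !big_ord7 /=; ring. Qed.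

Lemma cross_coord1 x y : cross x y o1 0 =
    (x o2 0 * y o4 0 - x o4 0 * y o2 0) + (x o3 0 * y o0 0 - x o0 0 * y o3 0)
  + (x o5 0 * y o6 0 - x o6 0 * y o5 0).
Proof. by rewrite crossE !big_ord7 /=; ring. Qed.

Lemma cross_coord2 x y : cross x y o2 0 =
    (x o3 0 * y o5 0 - x o5 0 * y o3 0) + (x o4 0 * y o1 0 - x o1 0 * y o4 0)
  + (x o6 0 * y o0 0 - x o0 0 * y o6 0).
Proof. by rewrite crossE !big_ord7 /=; ring. Qed.

Lemma cross_coord3 x y : cross x y o3 0 =
    (x o4 0 * y o6 0 - x o6 0 * y o4 0) + (x o5 0 * y o2 0 - x o2 0 * y o5 0)
  + (x o0 0 * y o1 0 - x o1 0 * y o0 0).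
Proof. by rewrite crossE !big_ord7 /=; ring. Qed.

Lemma cross_coord4 x y : cross x y o4 0 =
    (x o5 0 * y o0 0 - x o0 0 * y o5 0) + (x o6 0 * y o3 0 - x o3 0 * y o6 0)
  + (x o1 0 * y o2 0 - x o2 0 * y o1 0).
Proof. by rewrite crossE !big_ord7 /=; ring. Qed.

Lemma cross_coord5 x y : cross x y o5 0 =
    (x o6 0 * y o1 0 - x o1 0 * y o6 0) + (x o0 0 * y o4 0 - x o4 0 * y o0 0)
  + (x o2 0 * y o3 0 - x o3 0 * y o2 0).
Proof. by rewrite crossE !big_ord7 /=; ring. Qed.

Lemma cross_coord6 x y : cross x y o6 0 =
    (x o0 0 * y o2 0 - x o2 0 * y o0 0) + (x o1 0 * y o5 0 - x o5 0 * y o1 0)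
  + (x o3 0 * y o4 0 - x o4 0 * y o3 0).
Proof. by rewrite crossE !big_ord7 /=; ring. Qed.

End CrossCoordinates.

Local Ltac cross_by_coords :=
  apply/colP; apply: ord7_ind;
  rewrite !(mxE, cross_coord0, cross_coord1, cross_coord2, cross_coord3,
            cross_coord4, cross_coord5, cross_coord6); ring.

Section CrossAlgebra.
Variable F : fieldType.
Implicit Types x y z : 'cV[F]_7.

Lemma crossC x y : cross x y = - cross y x. Proof. by cross_by_coords. Qed.
Lemma crossDl x y z : cross (x + y) z = cross x z + cross y z. Proof. by cross_by_coords. Qed.
Lemma crossDr x y z : cross x (y + z) = cross x y + cross x z. Proof. by cross_by_coords. Qed.
Lemma crossZl k x y : cross (k *: x) y = k *: cross x y. Proof. by cross_by_coords. Qed.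
Lemma crossZr k x y : cross x (k *: y) = k *: cross x y. Proof. by cross_by_coords. Qed.
Lemma crossNl x y : cross (- x) y = - cross x y. Proof. by cross_by_coords. Qed.
Lemma crossNr x y : cross x (- y) = - cross x y. Proof. by cross_by_coords. Qed.
Lemma cross0r x : cross x 0 = 0. Proof. by cross_by_coords. Qed.
Lemma crossxx x : cross x x = 0. Proof. by cross_by_coords. Qed.

End CrossAlgebra.

Section Dot.
Variable R : realType.
Implicit Types x y z : 'cV[R]_7.

Lemma dotC x y : dot x y = dot y x.
Proof. by apply: eq_bigr => i _; rewrite mulrC. Qed.

Lemma dotDl x y z : dot (x + y) z = dot x z + dot y z.
Proof. by rewrite /dot -big_split; apply: eq_bigr => i _; rewrite mxE mulrDl. Qed.

Lemma dotZl k x y : dot (k *: x) y = k * dot x y.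
Proof. by rewrite /dot mulr_sumr; apply: eq_bigr => i _; rewrite mxE mulrA. Qed.

Lemma dot0l x : dot 0 x = 0.
Proof. by rewrite /dot big1 // => i _; rewrite mxE mul0r. Qed.

Lemma dot_suml I (r : seq I) (P : pred I) (G : I -> 'cV[R]_7) y :
  dot (\sum_(i <- r | P i) G i) y = \sum_(i <- r | P i) dot (G i) y.
Proof. exact: (big_morph (fun u => dot u y) (fun a b => dotDl a b y) (dot0l y)). Qed.

Lemma dot_eq0 x : (dot x x == 0) = (x == 0).
Proof.
apply/idP/eqP => [/eqP x0|->]; last by rewrite dot0l.
apply/colP => i; rewrite mxE; apply/eqP; rewrite -sqrf_eq0.
by move/eqP: x0; rewrite psumr_eq0 => [/allP/(_ i (mem_index_enum i))|k _]; rewrite ?sqr_ge0.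
Qed.

Local Ltac dot_by_coords :=
  rewrite /dot ?big_ord7 !(mxE, cross_coord0, cross_coord1, cross_coord2, cross_coord3,
            cross_coord4, cross_coord5, cross_coord6); ring.

Lemma dot_cross x y z : dot (cross x y) z = dot x (cross y z). Proof. by dot_by_coords. Qed.
Lemma dot_crossr x y : dot y (cross x y) = 0. Proof. by dot_by_coords. Qed.
Lemma double_cross x y : cross x (cross x y) = dot x y *: x - dot x x *: y.
Proof. by apply/colP; apply: ord7_ind; dot_by_coords. Qed.

End Dot.

Section OrthogonalComplement.
Variables (R : realType) (V : {vspace 'cV[R]_7}).

Definition basis_rows : 'M[R]_(\dim V, 7) := \matrix_(i, j) (vbasis V)`_i j 0.

Definition basis_dots : 'Hom('cV[R]_7, 'cV[R]_(\dim V)) := linfun (mulmx basis_rows).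

Definition perpv : {vspace 'cV[R]_7} := lker basis_dots.

Lemma perpvP x : reflect (in_perp V x) (x \in perpv).
Proof.
have rowsE i : (basis_rows *m x) i 0 = dot (vbasis V)`_i x.
  by rewrite mxE; apply: eq_bigr => j _; rewrite mxE.
rewrite memv_ker lfunE /=; apply: (iffP eqP) => [rows0 v Vv | perp_x].
  rewrite (coord_vbasis Vv) dot_suml big1 // => i _.
  by rewrite dotZl -rowsE rows0 mxE mulr0.
apply/matrixP => i j; rewrite (ord1 j) rowsE mxE perp_x //.
by rewrite vbasis_mem // mem_nth // size_tuple.
Qed.

Lemma capv_perpv : (V :&: perpv)%VS = 0%VS.
Proof.
apply/eqP; rewrite -subv0; apply/subvP => x /memv_capP[Vx /perpvP perp_x].
by rewrite memv0 -dot_eq0 perp_x.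
Qed.

Lemma addv_perpv : (V + perpv)%VS = fullv.
Proof.
apply/eqP; rewrite eqEdim subvf dimv_disjoint_sum ?capv_perpv //=.
have := limg_ker_dim basis_dots fullv.
rewrite capfv -/perpv => <-; rewrite addnC leq_add2r.
by rewrite (leq_trans (dimvS (subvf _))) // dimvf /dim /= muln1.
Qed.

Lemma dim_add_perpv : (\dim V + \dim perpv)%N = 7%N.
Proof. by rewrite -dimv_disjoint_sum ?capv_perpv // addv_perpv dimvf /dim /= muln1. Qed.

Lemma mem_addv_perpv x : x \in (V + perpv)%VS.
Proof. by rewrite addv_perpv memvf. Qed.

End OrthogonalComplement.

Definition cross_with (F : fieldType) (p x : 'cV[F]_7) : 'cV[F]_7 := cross x p.

Fact cross_with_is_linear (F : fieldType) (p : 'cV[F]_7) : linear (cross_with p).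
Proof. by move=> k x y; rewrite /cross_with crossDl crossZl. Qed.

HB.instance Definition _ (F : fieldType) (p : 'cV[F]_7) :=
  GRing.isLinear.Build F _ _ _ (cross_with p) (cross_with_is_linear p).

Section SubalgebraComplement.
Variables (R : realType) (V : {vspace 'cV[R]_7}).
Hypothesis V_MS : in_MS V.
Local Notation W := (perpv V).
Implicit Types u v w p q : 'cV[R]_7.

Lemma mem_cross_VV v w : v \in V -> w \in V -> cross v w \in V.
Proof. exact: V_MS.2. Qed.

Lemma mem_cross_VW v p : v \in V -> p \in W -> cross v p \in W.
Proof.
move=> Vv /perpvP Wp; apply/perpvP => u Vu.
by rewrite -dot_cross Wp // mem_cross_VV.
Qed.

Lemma mem_cross_WV p v : p \in W -> v \in V -> cross p v \in W.
Proof. by move=> Wp Vv; rewrite crossC memvN mem_cross_VW. Qed.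

Lemma dim_perpv_MS : \dim W = 4%N.
Proof. by have := dim_add_perpv V; rewrite V_MS.1 => -[]. Qed.

Lemma cross_perp_cross p v : p \in W -> v \in V -> cross p (cross v p) = dot p p *: v.
Proof.
move=> /perpvP Wp Vv.
by rewrite [cross v p]crossC crossNr double_cross dotC Wp // scale0r sub0r opprK.
Qed.

Lemma perpv_lineE p :
  p \in W -> p != 0 -> W = (<[p]> + linfun (cross_with p) @: V)%VS.
Proof.
move=> Wp p_neq0; have pp_neq0 : dot p p != 0 by rewrite dot_eq0.
have ker_cap : (V :&: lker (linfun (cross_with p)))%VS = 0%VS.
  apply/eqP; rewrite -subv0; apply/subvP => v /memv_capP[Vv].
  rewrite memv_ker lfunE /= /cross_with memv0 => /eqP vp0.
  have := cross_perp_cross Wp Vv; rewrite vp0 cross0r => /esym/eqP.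
  by rewrite scaler_eq0 (negPf pp_neq0).
have line_cap : (<[p]> :&: linfun (cross_with p) @: V)%VS = 0%VS.
  apply/eqP; rewrite -subv0; apply/subvP => x /memv_capP[/vlineP[k ->]].
  move=> /memv_imgP[v Vv]; rewrite lfunE /= /cross_with => kp_vp.
  have := dot_crossr v p; rewrite -kp_vp dotC dotZl => /eqP.
  by rewrite mulf_eq0 (negPf pp_neq0) orbF => /eqP ->; rewrite scale0r mem0v.
apply/eqP; rewrite eq_sym eqEdim dim_perpv_MS dimv_disjoint_sum // dim_vline p_neq0.
rewrite limg_dim_eq // V_MS.1 leqnn andbT.
rewrite subv_add -memvE Wp /=; apply/subvP => _ /memv_imgP[v Vv ->].
by rewrite lfunE mem_cross_VW.
Qed.

Lemma mem_cross_WW p q : p \in W -> q \in W -> cross p q \in V.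
Proof.
have [-> _ _|p_neq0 Wp] := eqVneq p 0; first by rewrite crossC cross0r oppr0 mem0v.
rewrite {1}(perpv_lineE Wp p_neq0).
move=> /memv_addP[_ /vlineP[k ->] [_ /memv_imgP[v Vv ->]] ->].
by rewrite lfunE crossDr crossZr crossxx scaler0 add0r cross_perp_cross // memvZ.
Qed.

Lemma der_stable_V d : is_der d -> {in W, forall p, d *m p \in W} ->
  {in V, forall v, d *m v \in V}.
Proof.
move=> der_d stableW v Vv; have [p Wp p_neq0] : exists2 p, p \in W & p != 0.
  by exists (vpick W); rewrite ?memv_pick // vpick0 -dimv_eq0 dim_perpv_MS.
have pp_neq0 : dot p p != 0 by rewrite dot_eq0.
have -> : v = (dot p p)^-1 *: cross p (cross v p).
  by rewrite cross_perp_cross // scalerA mulVf // scale1r.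
by rewrite -scalemxAr der_d memvZ // memvD // mem_cross_WW ?stableW ?mem_cross_VW.
Qed.

End SubalgebraComplement.

Section Involution.
Variables (R : realType) (V : {vspace 'cV[R]_7}) (theta : 'M[R]_7).
Hypothesis V_MS : in_MS V.
Local Notation W := (perpv V).
Hypothesis thetaV : {in V, forall v, theta *m v = v}.
Hypothesis thetaW : {in W, forall p, theta *m p = - p}.
Implicit Types (x : 'cV[R]_7) (d : 'M[R]_7).

Lemma theta_addE v p : v \in V -> p \in W -> theta *m (v + p) = v - p.
Proof. by move=> Vv Wp; rewrite mulmxDr thetaV ?thetaW. Qed.

Lemma theta_sqr : theta *m theta = 1%:M.
Proof.
apply: mulmx_cVP => x; have /memv_addP[v Vv [p Wp ->]] := mem_addv_perpv V x.
by rewrite mul1mx -mulmxA theta_addE // mulmxBr thetaV ?thetaW ?opprK.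
Qed.

Lemma theta_unit : theta \in unitmx.
Proof. by case: (mulmx1_unit theta_sqr). Qed.

Lemma invmx_theta : invmx theta = theta.
Proof. by have := mulKmx theta_unit theta; rewrite theta_sqr mulmx1. Qed.

Lemma theta_fixed_in_V x : theta *m x = x -> x \in V.
Proof.
have /memv_addP[v Vv [p Wp ->]] := mem_addv_perpv V x.
by rewrite theta_addE // => /addrI/eqP; rewrite lmod_eqN => /eqP ->; rewrite addr0.
Qed.

Lemma theta_negated_in_perp x : theta *m x = - x -> x \in W.
Proof.
have /memv_addP[v Vv [p Wp ->]] := mem_addv_perpv V x.
rewrite theta_addE // opprD => /addIr/esym/eqP.
by rewrite lmod_eqN => /eqP ->; rewrite add0r.
Qed.

Lemma theta_G2 : inG2 theta.
Proof.
split; first exact: theta_unit.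
move=> x y; have /memv_addP[v Vv [p Wp ->]] := mem_addv_perpv V x.
have /memv_addP[w Vw [q Wq ->]] := mem_addv_perpv V y.
rewrite !theta_addE // !crossDl !crossDr !crossNl !crossNr opprK !mulmxDr.
rewrite thetaV ?mem_cross_VV // thetaW ?mem_cross_VW // thetaW ?mem_cross_WV //.
by rewrite thetaV ?mem_cross_WW.
Qed.

Lemma theta_mulmx_conj d x : theta *m (d *m x) = (theta * d * theta) *m (theta *m x).
Proof. by rewrite -!mulmxE -!mulmxA [theta *m (theta *m x)]mulmxA theta_sqr mul1mx. Qed.

Lemma in_h4_theta d : in_h4 V d <-> is_der d /\ theta * d * theta = d.
Proof.
split=> [[der_d stable_perp] | [der_d conj_d]].
  have stableW : {in W, forall p, d *m p \in W}.
    by move=> p /perpvP/stable_perp/perpvP.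
  have stableV := der_stable_V V_MS der_d stableW.
  split=> //; apply: mulmx_cVP => x.
  have /memv_addP[v Vv [p Wp ->]] := mem_addv_perpv V x.
  rewrite -mulmxE -!mulmxA theta_addE // !mulmxBr mulmxDr thetaV ?stableV //.
  by rewrite thetaW ?stableW // opprK.
split=> // x /perpvP Wx; apply/perpvP/theta_negated_in_perp.
by rewrite theta_mulmx_conj conj_d thetaW // mulmxN.
Qed.

Lemma in_m4_theta d : in_m4 V d <-> is_der d /\ theta * d * theta = - d.
Proof.
split=> [[der_d [V_to_perp perp_to_V]] | [der_d conj_d]].
  split=> //; apply: mulmx_cVP => x.
  have /memv_addP[v Vv [p Wp ->]] := mem_addv_perpv V x.
  have dvW : d *m v \in W by apply/perpvP/V_to_perp.
  have dpV : d *m p \in V by apply/perp_to_V/perpvP.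
  rewrite -mulmxE -!mulmxA theta_addE // !mulmxBr thetaW // thetaV //.
  by rewrite mulNmx mulmxDr opprD.
split=> //; split=> [x Vx | x /perpvP Wx].
  by apply/perpvP/theta_negated_in_perp; rewrite theta_mulmx_conj conj_d thetaV // mulNmx.
by apply/theta_fixed_in_V; rewrite theta_mulmx_conj conj_d thetaW // mulNmx mulmxN opprK.
Qed.

Lemma conj_thetaK d : theta * (theta * d * theta) * theta = d.
Proof.
by rewrite -!mulmxE !mulmxA theta_sqr mul1mx -mulmxA theta_sqr mulmx1.
Qed.

Variable h : {vspace 'M[R]_7}.
Hypothesis h_der : {in h, forall d, is_der d}.

Lemma adapted_theta : adapted V h <-> in_Hh h theta.
Proof.
split=> [[split_h _] | [_ conj_h]].
  split=> [|d hd]; first exact: theta_G2.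
  have [a [b [ha /in_h4_theta[_ conj_a] hb /in_m4_theta[_ conj_b] ->]]] := split_h d hd.
  by rewrite invmx_theta mulrDr mulrDl conj_a conj_b memvB.
have {}conj_h d : d \in h -> theta * d * theta \in h.
  by move=> /conj_h; rewrite invmx_theta.
split=> [d hd | d _ /in_h4_theta[_ conj_d] /in_m4_theta[_]]; last first.
  by rewrite conj_d => /eqP; rewrite eq_sym lmod_eqN => /eqP.
pose e := theta * d * theta.
have he : e \in h by exact: conj_h.
exists (2^-1 *: (d + e)), (2^-1 *: (d - e)); split.
- by rewrite memvZ // memvD.
- apply/in_h4_theta; split; first by apply: h_der; rewrite memvZ // memvD.
  by rewrite -scalerAr -scalerAl mulrDr mulrDl conj_thetaK addrC.
- by rewrite memvZ // memvB.
- apply/in_m4_theta; split; first by apply: h_der; rewrite memvZ // memvB.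
  by rewrite -scalerAr -scalerAl mulrBr mulrBl conj_thetaK -scalerN opprB.
- rewrite -scalerDr addrACA subrr addr0 -mulr2n -scaler_nat scalerA.
  by rewrite mulVf ?pnatr_eq0 // scale1r.
Qed.

End Involution.

Theorem mainTheorem10 (R : realType) (V : {vspace 'cV[R]_7})
    (h : {vspace 'M[R]_7}) (thetaV : 'M[R]_7) :
  in_MS V -> principal_subalg h ->
  (forall x, x \in V -> thetaV *m x = x) ->
  (forall x, in_perp V x -> thetaV *m x = - x) ->
  (adapted V h <-> in_Hh h thetaV).
Proof.
move=> V_MS [_ [h_der _] _ _] theta_V theta_perp.
by apply: adapted_theta => // p /perpvP; apply: theta_perp.
Qed.
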